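(* Let $\mathcal{D}_I$ be the class of all finite irreflexive digraphs. (1) A class $\mathcal{C}\subseteq\mathcal{D}_I$ that is downward closed under the homomorphic image ordering is well quasi-ordered (under that ordering) if and only if it is finite. (2) For any finite set $\{O_1,\dots,O_k\}\subseteq\mathcal{D}_I$, the class $\mathrm{Av}(O_1,\dots,O_k)$, taken with respect to either the standard or the strong homomorphic image ordering, is not well quasi-ordered (under the respective ordering).
   Context: A digraph is a set $D$ with a binary relation $E(D)\subseteq D\times D$; it is irreflexive if no loop $(x,x)$ is an edge. A homomorphism maps edges to edges (so within irreflexive digraphs no edge can be collapsed to a vertex); it is strong if additionally every edge of the target between vertices of the image is the image of an edge. Standard homomorphic image ordering: $A\preceq B$ iff there is a surjective homomorphism $B\to A$; strong: iff there is a surjective strong homomorphism $B\to A$. $\mathrm{Av}(B)=\{x\in\mathcal{D}_I: b\not\preceq x\ \forall b\in B\}$. Well quasi-ordered means no infinite strictly decreasing sequence and no infinite antichain; digraphs considered up to isomorphism (finite means finitely many isomorphism types). *)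

From Stdlib Require List.
From mathcomp Require Import all_boot.
Set Implicit Arguments. Unset Strict Implicit. Unset Printing Implicit Defensive.

Record digraph := Digraph { dn : nat; de : rel 'I_dn }.
Arguments de : clear implicits.

Definition irrefl_digraph (G : digraph) : Prop := forall x : 'I_(dn G), ~~ de G x x.

Definition is_hom (G H : digraph) (f : 'I_(dn G) -> 'I_(dn H)) : Prop :=
  forall x y, de G x y -> de H (f x) (f y).

Definition is_strong_hom (G H : digraph) (f : 'I_(dn G) -> 'I_(dn H)) : Prop :=
  is_hom f /\
  forall (u v : 'I_(dn H)), (exists a, f a = u) -> (exists b, f b = v) ->
    de H u v -> exists a b, [/\ de G a b, f a = u & f b = v].

Definition surj (A B : Type) (f : A -> B) : Prop := forall y, exists x, f x = y.

Definition hom_le (A B : digraph) : Prop :=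
  exists f : 'I_(dn B) -> 'I_(dn A), is_hom f /\ surj f.

Definition strong_hom_le (A B : digraph) : Prop :=
  exists f : 'I_(dn B) -> 'I_(dn A), is_strong_hom f /\ surj f.

Definition isomorphic (G H : digraph) : Prop :=
  exists f : 'I_(dn G) -> 'I_(dn H),
    bijective f /\ forall x y, de G x y = de H (f x) (f y).

Definition downward_closed (le : digraph -> digraph -> Prop) (C : digraph -> Prop) : Prop :=
  forall A B, irrefl_digraph A -> C B -> le A B -> C A.

Definition finite_class (C : digraph -> Prop) : Prop :=
  exists L : seq digraph, forall G, C G -> exists2 H, List.In H L & isomorphic G H.

Definition wqo (le : digraph -> digraph -> Prop) (C : digraph -> Prop) : Prop :=
  (~ exists s : nat -> digraph,
       forall i, [/\ C (s i), le (s i.+1) (s i) & ~ le (s i) (s i.+1)]) /\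
  (~ exists s : nat -> digraph,
       (forall i, C (s i)) /\ forall i j, i <> j -> ~ le (s i) (s j)).

Definition Av (le : digraph -> digraph -> Prop) (B : seq digraph) (x : digraph) : Prop :=
  irrefl_digraph x /\ forall b, List.In b B -> ~ le b x.

(** The complete irreflexive digraphs [K_n] form an antichain for the
    homomorphic image ordering: a homomorphism out of [K_n] into an irreflexive
    digraph is injective, while a surjection can only decrease the number of
    vertices.  Every irreflexive digraph [G] maps onto [K_(dn G)] by the
    identity, so an infinite downward closed class (which has unbounded vertex
    counts) contains infinitely many [K_n], and [Av(O_1, ..., O_k)] contains
    every [K_n] with [n] larger than all [dn O_i].  Conversely a finite class is
    well quasi-ordered by the pigeonhole principle: any sequence in it repeats
    an isomorphism type. *)

From Stdlib Require List.
From mathcomp Require Import all_boot.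
From Stdlib Require Import Classical ClassicalEpsilon.

Set Implicit Arguments. Unset Strict Implicit. Unset Printing Implicit Defensive.

Lemma In_of_mem (T : eqType) (x : T) (s : seq T) : x \in s -> List.In x s.
Proof. by elim: s => //= y s IHs; rewrite in_cons => /predU1P [->|/IHs]; [left|right]. Qed.

Lemma pigeonhole_nat (m : nat) (f : nat -> nat) :
  (forall i, f i < m) -> exists i j, i < j /\ f i = f j.
Proof.
move=> f_lt; pose g (i : 'I_m.+1) : 'I_m := Ordinal (f_lt i).
have /injectivePn [i [j neq_ij /(congr1 val) /= eq_fij]] : ~~ injectiveb g.
  by apply/injectiveP => /leq_card; rewrite !card_ord ltnn.
have [lt_ij|lt_ji|/val_inj eq_ij] := ltngtP i j.
- by exists i, j.
- by exists j, i.
- by rewrite eq_ij eqxx in neq_ij.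
Qed.

Lemma unbounded_inj_seq (P : nat -> Prop) :
  (forall N, exists n, N < n /\ P n) -> exists a : nat -> nat, injective a /\ forall i, P (a i).
Proof.
move=> /choice [g gP]; pose a i := iter i.+1 g 0.
have a_incr : {homo a : i j / i < j} := homo_ltn ltn_trans (fun i => (gP (a i)).1).
exists a; split=> [i j eq_a|i]; last exact: (gP _).2.
by case: (ltngtP i j) => // /a_incr; rewrite eq_a ltnn.
Qed.

Definition complete_digraph (n : nat) : digraph := @Digraph n (fun x y => x != y).

Lemma irrefl_complete n : irrefl_digraph (complete_digraph n).
Proof. by move=> x /=; rewrite eqxx. Qed.

Lemma hom_le_refl G : hom_le G G.
Proof. by exists id; split=> // y; exists y. Qed.

Lemma hom_le_trans A B C : hom_le A B -> hom_le B C -> hom_le A C.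
Proof.
move=> [f [hom_f surj_f]] [g [hom_g surj_g]]; exists (f \o g); split=> [x y /hom_g/hom_f //|z].
by have [y <-] := surj_f z; have [x <-] := surj_g y; exists x.
Qed.

Lemma strong_hom_le_hom A B : strong_hom_le A B -> hom_le A B.
Proof. by move=> [f [[hom_f _] surj_f]]; exists f. Qed.

Lemma isomorphic_hom_le G G' H : isomorphic G H -> isomorphic G' H -> hom_le G G'.
Proof.
move=> [f [[g fK gK] ef]] [f' [[g' f'K g'K] ef']]; exists (g \o f'); split=> [x y|z] /=.
  by rewrite ef !gK -ef'.
by exists (g' (f z)); rewrite /= g'K fK.
Qed.

Lemma hom_le_dn A B : hom_le A B -> dn A <= dn B.
Proof.
move=> [f [_ surj_f]]; have im_f : f @: [set: 'I_(dn B)] = [set: 'I_(dn A)].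
  by apply/setP => y; rewrite in_setT; have [x <-] := surj_f y; rewrite imset_f.
by rewrite -[dn A]card_ord -cardsT -im_f (leq_trans (leq_imset_card _ _)) // cardsT card_ord.
Qed.

Lemma hom_complete_inj n (G : digraph) (f : 'I_n -> 'I_(dn G)) :
  irrefl_digraph G -> @is_hom (complete_digraph n) G f -> injective f.
Proof.
move=> irr_G hom_f x y eq_f; apply: contraNeq (irr_G (f x)) => neq_xy.
by rewrite {2}eq_f; exact: hom_f.
Qed.

Lemma hom_le_complete_dn n (G : digraph) :
  irrefl_digraph G -> hom_le G (complete_digraph n) -> n <= dn G.
Proof.
move=> irr_G [f [hom_f _]]; rewrite -[n]card_ord -[dn G]card_ord.
exact: leq_card (hom_complete_inj irr_G hom_f).
Qed.

Lemma hom_le_complete_eq m n : hom_le (complete_digraph m) (complete_digraph n) -> m = n.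
Proof.
move=> le_mn; apply/anti_leq/andP; split; first exact: hom_le_dn le_mn.
exact: hom_le_complete_dn (@irrefl_complete m) le_mn.
Qed.

Lemma hom_le_complete_irrefl (G : digraph) :
  irrefl_digraph G -> hom_le (complete_digraph (dn G)) G.
Proof.
move=> irr_G; exists id; split=> [x y|y]; last by exists y.
by apply: contraTneq => ->; exact: irr_G.
Qed.

Definition digraph_of_ffun k (F : {ffun 'I_k * 'I_k -> bool}) : digraph :=
  @Digraph k (fun x y => F (x, y)).

Definition digraphs_upto (N : nat) : seq digraph :=
  List.flat_map (fun k => List.map (@digraph_of_ffun k) (enum {ffun 'I_k * 'I_k -> bool}))
    (iota 0 N.+1).

Lemma finite_class_bounded (C : digraph -> Prop) N :
  (forall G, C G -> dn G <= N) -> finite_class C.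
Proof.
move=> C_le; exists (digraphs_upto N) => G CG.
exists (digraph_of_ffun [ffun p => de G p.1 p.2]); last first.
  by exists id; split=> [|x y]; [exists id | rewrite /= ffunE].
apply/List.in_flat_map; exists (dn G); split.
  by apply: In_of_mem; rewrite mem_iota ltnS C_le.
by apply/List.in_map/In_of_mem; rewrite mem_enum.
Qed.

Lemma finite_class_pigeonhole (C : digraph -> Prop) (s : nat -> digraph) :
  finite_class C -> (forall i, C (s i)) ->
  exists i j, i < j /\ hom_le (s i) (s j) /\ hom_le (s j) (s i).
Proof.
move=> [L reprL] Cs; pose d := complete_digraph 0.
have /choice [k kP] i : exists k, k < size L /\ isomorphic (s i) (List.nth k L d).
  have [H /(List.In_nth _ _ d) [k [/ltP lt_k <-]] iso_H] := reprL _ (Cs i).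
  by exists k.
have [i [j [lt_ij eq_k]]] := pigeonhole_nat (fun i => (kP i).1).
have iso_i := (kP i).2; have iso_j := (kP j).2; rewrite eq_k in iso_i.
by exists i, j; split=> //; split;
  [exact: isomorphic_hom_le iso_i iso_j | exact: isomorphic_hom_le iso_j iso_i].
Qed.

Lemma wqo_finite_class (C : digraph -> Prop) : finite_class C -> wqo hom_le C.
Proof.
move=> finC; split=> [[s sP]|[s [Cs anti_s]]].
  have s_decr : {homo s : i j / i <= j >-> hom_le j i}.
    apply: homo_leq => [|y x z le_yx le_zy|i]; first exact: hom_le_refl.
      exact: hom_le_trans le_zy le_yx.
    by case: (sP i).
  have Cs i : C (s i) by case: (sP i).
  have [i [j [lt_ij [le_ij _]]]] := finite_class_pigeonhole finC Cs.
  by case: (sP i) => _ _; apply; apply: hom_le_trans le_ij (s_decr _ _ lt_ij).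
have [i [j [lt_ij [le_ij _]]]] := finite_class_pigeonhole finC Cs.
by apply: (anti_s i j) => // eq_ij; rewrite eq_ij ltnn in lt_ij.
Qed.

Lemma not_wqo_complete_unbounded (le : digraph -> digraph -> Prop) (C : digraph -> Prop) :
  (forall A B, le A B -> hom_le A B) ->
  (forall N, exists n, N < n /\ C (complete_digraph n)) -> ~ wqo le C.
Proof.
move=> le_hom /unbounded_inj_seq [a [inj_a Ca]] [_ no_antichain]; apply: no_antichain.
exists (fun i => complete_digraph (a i)); split=> // i j neq_ij /le_hom /hom_le_complete_eq.
by move/inj_a.
Qed.

Lemma infinite_downward_closed_complete (C : digraph -> Prop) :
  (forall G, C G -> irrefl_digraph G) -> downward_closed hom_le C ->
  ~ finite_class C -> forall N, exists n, N < n /\ C (complete_digraph n).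
Proof.
move=> irrC downC infC N; apply: NNPP => no_large; apply: infC.
apply: (@finite_class_bounded _ N) => G CG; rewrite leqNgt; apply/negP => lt_NG.
apply: no_large; exists (dn G); split=> //.
exact: downC (@irrefl_complete _) CG (hom_le_complete_irrefl (irrC _ CG)).
Qed.

Lemma Av_complete_unbounded (le : digraph -> digraph -> Prop) (O : seq digraph) :
  (forall A B, le A B -> hom_le A B) -> (forall b, List.In b O -> irrefl_digraph b) ->
  forall N, exists n, N < n /\ Av le O (complete_digraph n).
Proof.
move=> le_hom irrO N; pose n := (maxn N (sumn (map dn O))).+1.
exists n; split; first by rewrite ltnS leq_maxl.
split=> [|b inO /le_hom le_b]; first exact: irrefl_complete.
have le_sum : dn b <= sumn (map dn O).
  elim: O inO {irrO n le_b} => //= c O IHO [<-|/IHO]; first exact: leq_addr.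
  by move/leq_trans; apply; rewrite leq_addl.
have := leq_trans (hom_le_complete_dn (irrO _ inO) le_b) le_sum.
by rewrite leqNgt ltnS leq_maxr.
Qed.

Theorem theorem4p4 :
  (forall C : digraph -> Prop,
     (forall G, C G -> irrefl_digraph G) ->
     downward_closed hom_le C ->
     (wqo hom_le C <-> finite_class C)) /\
  (forall O : seq digraph,
     (forall b, List.In b O -> irrefl_digraph b) ->
     ~ wqo hom_le (Av hom_le O) /\ ~ wqo strong_hom_le (Av strong_hom_le O)).
Proof.
split=> [C irrC downC|O irrO].
  split=> [wqoC|]; last exact: wqo_finite_class.
  apply: NNPP => infC; apply: not_wqo_complete_unbounded wqoC => //.
  exact: infinite_downward_closed_complete.
have hom_le_hom A B : hom_le A B -> hom_le A B by [].
split; first exact: not_wqo_complete_unbounded hom_le_hom (Av_complete_unbounded hom_le_hom irrO).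
exact: not_wqo_complete_unbounded strong_hom_le_hom (Av_complete_unbounded strong_hom_le_hom irrO).
Qed.
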